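(* Let $\mathcal{Q}$, $\mathcal{S}$, $p_1,\dots,p_4$ be as in the context. If $\mathcal{Q}$ has no base points in $\mathbb{P}^2(\mathbb{K})$, then $\gcd(p_1,p_2,p_3,p_4)=1$.
   Context: $\mathbb{K}$ is an algebraically closed field of characteristic zero and $\Sigma\subset\mathbb{P}^3(\mathbb{K})$ a surface. $\mathcal{Q}=(q_1:\cdots:q_4)$ is a rational parametrization of $\Sigma$ ($q_i\in\mathbb{K}[t_1,t_2,t_3]$ homogeneous of the same degree, $\gcd(q_1,\dots,q_4)=1$, image dense in $\Sigma$). $\mathcal{S}=(s_1:s_2:s_3):\mathbb{P}^2(\mathbb{K})\dashrightarrow\mathbb{P}^2(\mathbb{K})$ is a dominant rational map with $s_i$ homogeneous of the same degree and $\gcd(s_1,s_2,s_3)=1$. $p_i=q_i(s_1,s_2,s_3)$ for $i=1,\dots,4$. A base point of $\mathcal{Q}$ is a point $A\in\mathbb{P}^2(\mathbb{K})$ with $q_1(A)=\cdots=q_4(A)=0$. *)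

From HB Require Import structures.
From mathcomp Require Import all_boot all_order all_algebra.
From mathcomp Require Import mpoly.

Set Implicit Arguments.
Unset Strict Implicit.
Unset Printing Implicit Defensive.

Import GRing.Theory.
Local Open Scope ring_scope.

Section Defs.
Variable K : closedFieldType.

(* a point of P^(n-1)(K), given by homogeneous coordinates: a nonzero vector *)
Definition nonzero_vec n (v : 'I_n -> K) : Prop := exists i, v i != 0.

Definition mdivides n (d p : {mpoly K[n]}) : Prop := exists c, p = d * c.

Definition mconst n (p : {mpoly K[n]}) : Prop := (msize p <= 1)%N.

Definition gcd_is_one n (I : finType) (f : I -> {mpoly K[n]}) : Prop :=
  forall d, (forall i, mdivides d (f i)) -> mconst d.

Definition homog_same_deg n (I : finType) (f : I -> {mpoly K[n]}) : Prop :=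
  exists deg : nat, forall i, f i \is deg.-homog.

Definition map_at n (I : finType) (f : I -> {mpoly K[n]}) (v : 'I_n -> K) :
  I -> K := fun i => (f i).@[v].

Definition is_base_point n (I : finType) (f : I -> {mpoly K[n]})
  (A : 'I_n -> K) : Prop := nonzero_vec A /\ forall i, (f i).@[A] = 0.

(* the rational map P^(n-1) --> P^(m-1) defined by f has Zariski-dense image
   in the closed set {x | P x}: its image (at points where it is defined)
   lies in {x | P x}, and every homogeneous polynomial vanishing on the image
   vanishes on the whole of {x | P x}. *)
Definition image_dense_in n m (f : 'I_m -> {mpoly K[n]})
  (P : ('I_m -> K) -> Prop) : Prop :=
  (forall v, nonzero_vec v -> nonzero_vec (map_at f v) -> P (map_at f v)) /\
  (forall (G : {mpoly K[m]}) (e : nat), G \is e.-homog ->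
     (forall v, nonzero_vec v -> nonzero_vec (map_at f v) ->
        G.@[map_at f v] = 0) ->
     forall x, nonzero_vec x -> P x -> G.@[x] = 0).

Definition proj_surface (F : {mpoly K[4]}) : Prop :=
  F != 0 /\ exists deg : nat, (0 < deg)%N /\ F \is deg.-homog.

Definition zero_set m (F : {mpoly K[m]}) : ('I_m -> K) -> Prop :=
  fun x => nonzero_vec x /\ F.@[x] = 0.

Definition dominant n m (f : 'I_m -> {mpoly K[n]}) : Prop :=
  image_dense_in f (fun x => nonzero_vec x).

End Defs.

From HB Require Import structures.
From mathcomp Require Import all_boot all_order all_algebra.
From mathcomp Require Import mpoly.
From Stdlib Require Import Classical Wf_nat.

Set Implicit Arguments.
Unset Strict Implicit.
Unset Printing Implicit Defensive.

Import GRing.Theory.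
Local Open Scope ring_scope.

(* Suppose a nonconstant d divides every p_i = q_i(s) and let e be an
   irreducible factor of d.  As gcd(s_1, s_2, s_3) = 1, e does not divide
   some s_j, so by the Nullstellensatz for the hypersurface e = 0 there is a
   point v with e(v) = 0 and s_j(v) <> 0.  Then A = s(v) is a point of P^2
   with q_i(A) = p_i(v) = 0 for every i: a base point of Q.
   The Nullstellensatz step rests on irreducible polynomials in
   K[t_1, ..., t_n] being prime, proved by induction on n through
   K[t_1, ..., t_n] = K[t_1, ..., t_(n-1)][t_n] with Gauss's lemma and
   pseudo-division instead of fraction fields. *)

Lemma ex_min_nat (A : nat -> Prop) :
  (exists n, A n) -> exists m, A m /\ forall k, A k -> (m <= k)%N.
Proof.
move=> exA.
have [m [[Am m_min] _]] :=
  @dec_inh_nat_subset_has_unique_least_element A (fun n => classic (A n)) exA.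
by exists m; split=> // k /m_min /leP.
Qed.

Section Divisibility.
Variable R : comPzRingType.
Implicit Types a b c : R.

Definition dvdr a b := exists c, b = a * c.

Lemma dvdr_refl a : dvdr a a. Proof. by exists 1; rewrite mulr1. Qed.

Lemma dvdr0 a : dvdr a 0. Proof. by exists 0; rewrite mulr0. Qed.

Lemma dvdr_mulr a b c : dvdr a b -> dvdr a (b * c).
Proof. by case=> d ->; exists (d * c); rewrite mulrA. Qed.

Lemma dvdr_mull a b c : dvdr a b -> dvdr a (c * b).
Proof. by rewrite mulrC; apply: dvdr_mulr. Qed.

Lemma dvdrD a b c : dvdr a b -> dvdr a c -> dvdr a (b + c).
Proof. by case=> d -> [e ->]; exists (d + e); rewrite mulrDr. Qed.

Lemma dvdrN a b : dvdr a b -> dvdr a (- b).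
Proof. by case=> d ->; exists (- d); rewrite mulrN. Qed.

Lemma dvdrB a b c : dvdr a b -> dvdr a c -> dvdr a (b - c).
Proof. by move=> ab ac; apply/dvdrD/dvdrN. Qed.

Lemma dvdr_addl a b c : dvdr a c -> dvdr a (b + c) <-> dvdr a b.
Proof.
move=> ac; split=> [abc|ab]; last exact: dvdrD.
by rewrite -(addrK c b); apply: dvdrB.
Qed.

Lemma dvdr_trans a b c : dvdr a b -> dvdr b c -> dvdr a c.
Proof. by case=> d -> [e ->]; exists (d * e); rewrite mulrA. Qed.

End Divisibility.

Section Factorization.
Variable R : comUnitRingType.
Implicit Types a b u : R.

Definition irreducible_elt a := [/\ a != 0, a \notin GRing.unit &
  forall x y, a = x * y -> x \is a GRing.unit \/ y \is a GRing.unit].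

Definition prime_elt a := [/\ a != 0, a \notin GRing.unit &
  forall x y, dvdr a (x * y) -> dvdr a x \/ dvdr a y].

Lemma dvdr_unit a u : u \is a GRing.unit -> dvdr a u -> a \is a GRing.unit.
Proof. by move=> uU [c eu]; apply/unitrPr; exists (c / u); rewrite mulrA -eu divrr. Qed.

Lemma dvdr_mulr_unit a b u : u \is a GRing.unit -> dvdr (a * u) b <-> dvdr a b.
Proof.
move=> uU; split=> [|[c ->]]; first by apply: dvdr_trans; exists u.
by exists (u^-1 * c); rewrite mulrA mulrK.
Qed.

Lemma prime_elt_dvdM a x y : prime_elt a -> dvdr a (x * y) -> dvdr a x \/ dvdr a y.
Proof. by case=> _ _; apply. Qed.

Lemma prime_elt_dvdX a b k : prime_elt a -> dvdr a (b ^+ k) -> dvdr a b.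
Proof.
case=> _ aU aP; elim: k => [|k IHk].
  by rewrite expr0 => /(dvdr_unit (unitr1 R)); rewrite (negPf aU).
by rewrite exprS => /aP [|/IHk].
Qed.

End Factorization.

Section RingIsomorphism.
Variables (A B : comUnitRingType) (phi : {rmorphism A -> B}).
Hypothesis phi_bij : bijective phi.

Let phi_inj : injective phi := bij_inj phi_bij.

Let phi_surj b : exists a, b = phi a.
Proof. by have [psi _ psiK] := phi_bij; exists (psi b); rewrite psiK. Qed.

Lemma iso_unitE a : (phi a \is a GRing.unit) = (a \is a GRing.unit).
Proof.
apply/idP/idP => [/unitrP[b]|]; last exact: rmorph_unit.
have [c ->] := phi_surj b.
rewrite -!rmorphM -(rmorph1 phi) => -[/phi_inj ca /phi_inj ac].
by apply/unitrP; exists c.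
Qed.

Lemma iso_dvdrE a b : dvdr (phi a) (phi b) <-> dvdr a b.
Proof.
split=> [[c]|[c ->]]; last by exists (phi c); rewrite rmorphM.
by have [c' ->] := phi_surj c; rewrite -rmorphM => /phi_inj ->; exists c'.
Qed.

Lemma iso_irreducible a : irreducible_elt a -> irreducible_elt (phi a).
Proof.
case=> a0 aU aI; split; first by rewrite (raddf_eq0 _ phi_inj).
  by rewrite iso_unitE.
move=> x y; have [x' ->] := phi_surj x; have [y' ->] := phi_surj y.
by rewrite -rmorphM !iso_unitE => /phi_inj /aI.
Qed.

Lemma iso_prime a : prime_elt (phi a) <-> prime_elt a.
Proof.
rewrite /prime_elt (raddf_eq0 _ phi_inj) iso_unitE.
split=> -[a0 aU aP]; split=> // x y.
  by rewrite -!iso_dvdrE rmorphM => /aP.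
have [x' ->] := phi_surj x; have [y' ->] := phi_surj y.
by rewrite -rmorphM !iso_dvdrE => /aP.
Qed.

End RingIsomorphism.

Section GaussLemma.
Variable R : idomainType.
Implicit Types (a c : R) (P Q : {poly R}).

Lemma polyC_unitE c : (c%:P \is a GRing.unit) = (c \is a GRing.unit).
Proof.
rewrite poly_unitE coefC /=; have [->|c0] := eqVneq c 0; first by rewrite unitr0 andbF.
by rewrite size_polyC c0.
Qed.

Lemma dvdr_polyCP a P : dvdr a%:P P <-> forall i, dvdr a P`_i.
Proof.
split=> [[c ->] i|]; first by exists c`_i; rewrite coefCM.
elim/poly_ind: P => [|P c IHP] dvd_coef; first exact: dvdr0.
have [|d ->] := IHP.
  by move=> i; have := dvd_coef i.+1; rewrite coefD coefMX coefC /= addr0.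
have := dvd_coef 0%N; rewrite coefD coefMX coefC /= add0r => -[e ->].
by exists (d * 'X + e%:P); rewrite mulrDr mulrA polyCM.
Qed.

Lemma dvdr_polyC_mulX a P : dvdr a%:P (P * 'X) <-> dvdr a%:P P.
Proof.
rewrite !dvdr_polyCP; split=> dvd_coef i; first by have := dvd_coef i.+1; rewrite coefMX.
by rewrite coefMX; case: i => [|i] /=; [exact: dvdr0 | exact: dvd_coef].
Qed.

Lemma dvdr_polyC_MXaddC a c P :
  dvdr a%:P (P * 'X + c%:P) <-> dvdr a%:P P /\ dvdr a c.
Proof.
rewrite !dvdr_polyCP; split=> [dvd_coef|[dP dc] [|i]].
- split=> [i|]; [have := dvd_coef i.+1 | have := dvd_coef 0%N];
    by rewrite coefD coefMX coefC /= ?addr0 ?add0r.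
- by rewrite coefD coefMX coefC /= add0r.
- by rewrite coefD coefMX coefC /= addr0.
Qed.

Lemma dvdr_polyC_mulXaddC a c P Q : dvdr a c ->
  dvdr a%:P ((P * 'X + c%:P) * Q) <-> dvdr a%:P (P * Q).
Proof.
move=> [d ->]; rewrite mulrDl mulrAC dvdr_addl ?dvdr_polyC_mulX //.
by rewrite polyCM -mulrA; apply/dvdr_mulr/dvdr_refl.
Qed.

Lemma size_dvdr_polyC P c : dvdr P c%:P -> c != 0 -> (size P <= 1)%N.
Proof.
move=> [C eC] c0; have cP0 : c%:P != 0 by rewrite polyC_eq0.
have P0 : P != 0 by apply: contraNneq cP0 => P0; rewrite eC P0 mul0r.
have C0 : C != 0 by apply: contraNneq cP0 => C0; rewrite eC C0 mulr0.
move: (size_mul P0 C0); rewrite -eC size_polyC c0 -size_poly_gt0 in C0 *.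
by case: (size C) C0 => // k _; rewrite addnS /= => ->; apply: leq_addr.
Qed.

Lemma prime_elt_polyC p : prime_elt p -> prime_elt (p%:P : {poly R}).
Proof.
case=> p0 pU p_prime; split; [by rewrite polyC_eq0 | by rewrite polyC_unitE |].
elim/poly_ind => [|P c IHP] Q; first by left; exact: dvdr0.
elim/poly_ind: Q => [|Q d IHQ] dvd_PQ; first by right; exact: dvdr0.
have := (dvdr_polyCP _ _).1 dvd_PQ 0%N.
rewrite coef0M !coefD !coefMX !coefC /= !add0r => /p_prime [pc|pd].
  have /IHP [pP|pQ] := (dvdr_polyC_mulXaddC _ _ pc).1 dvd_PQ; last by right.
  by left; apply/dvdr_polyC_MXaddC.
rewrite mulrC in dvd_PQ.
have := (dvdr_polyC_mulXaddC _ _ pd).1 dvd_PQ.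
rewrite mulrC => /IHQ [pP|pQ]; first by left.
by right; apply/dvdr_polyC_MXaddC.
Qed.

Lemma irreducible_elt_polyC c : irreducible_elt c%:P -> irreducible_elt c.
Proof.
case=> c0 cU c_fact; split; [by rewrite -polyC_eq0 | by rewrite -polyC_unitE |].
move=> x y exy; rewrite -(polyC_unitE x) -(polyC_unitE y).
by apply: c_fact; rewrite exy polyCM.
Qed.

End GaussLemma.

Section PolyPrime.
Variables (R : idomainType) (mu : R -> nat).
Hypothesis mu_mul : forall a b : R, a != 0 -> b != 0 -> b \notin GRing.unit ->
  (mu a < mu (b * a))%N.
Hypothesis prime_divisor : forall a : R, a != 0 -> a \notin GRing.unit ->
  exists2 p, prime_elt p & dvdr p a.
Implicit Types (a c : R) (f g h P Q : {poly R}).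

Lemma irreducible_elt_prime_C c : irreducible_elt c -> prime_elt c.
Proof.
case=> c0 cU c_irr; have [p [p0 pU p_prime] [c' ec]] := prime_divisor c0 cU.
have c'U : c' \is a GRing.unit by case: (c_irr _ _ ec) => // pU'; rewrite pU' in pU.
by split=> // x y; rewrite ec !dvdr_mulr_unit //; exact: p_prime.
Qed.

Definition primitive_poly f := forall p, prime_elt p -> ~ dvdr p%:P f.

Lemma primitive_dvdr_mulC f a Q :
  primitive_poly f -> a != 0 -> dvdr f (a%:P * Q) -> dvdr f Q.
Proof.
move=> f_prim; have [N] := ubnP (mu a); elim: N a Q => // N IHN a Q mu_lt a0 [c ec].
have [aU|aU] := boolP (a \is a GRing.unit).
  by exists (a^-1%:P * c); rewrite mulrCA -ec mulrA -polyCM mulVr ?mul1r.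
have [p p_prime [b eb]] := prime_divisor a0 aU; have [p0 pU _] := p_prime.
have b0 : b != 0 by apply: contraNneq a0 => b0; rewrite eb b0 mulr0.
have : dvdr p%:P (f * c) by rewrite -ec eb polyCM -mulrA; exists (b%:P * Q).
case/(prime_elt_dvdM (prime_elt_polyC p_prime)) => [/(f_prim _ p_prime)[] | [c' ec']].
apply: (IHN b) => //; first by rewrite -ltnS (leq_trans _ mu_lt) // ltnS eb mu_mul.
exists c'; apply: (@mulfI _ p%:P); first by rewrite polyC_eq0.
by rewrite mulrA -polyCM -eb ec ec' mulrCA.
Qed.

Lemma irreducible_primitive f :
  irreducible_elt f -> (1 < size f)%N -> primitive_poly f.
Proof.
case=> _ _ f_irr sf p [p0 pU _] [g eg].
case: (f_irr _ _ eg); first by rewrite polyC_unitE (negPf pU).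
rewrite poly_unitE => /andP[/eqP sg _].
by move: sf; rewrite eg size_Cmul // sg.
Qed.

(* The [P] with [dvdr f (P * h)] form an ideal.  A nonzero element of least
   size divides every element up to a power of its leading coefficient
   (pseudo-division); made primitive by dividing out prime constants, which
   keeps it in the ideal, it divides them outright. *)
Section MultiplierIdeal.
Variables f h : {poly R}.
Hypothesis f_prim : primitive_poly f.

Let I P := dvdr f (P * h).

Lemma min_size_multiplier_dvdr P G : P != 0 -> I P ->
    (forall Q, Q != 0 -> I Q -> (size P <= size Q)%N) -> I G ->
  dvdr P ((lead_coef P ^+ scalp G P)%:P * G).
Proof.
move=> P0 IP P_min IG; have eG := Pdiv.Idomain.divp_eq G P.
suff r0 : Pdiv.Idomain.modp G P = 0.
  by exists (Pdiv.Idomain.divp G P); rewrite mul_polyC eG r0 addr0 mulrC.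
apply/eqP/contraT => r0.
suff : (size P <= size (Pdiv.Idomain.modp G P))%N.
  by rewrite leqNgt Pdiv.Idomain.ltn_modp P0.
apply: P_min => //; rewrite /I.
have -> : Pdiv.Idomain.modp G P =
    (lead_coef P ^+ scalp G P) *: G - Pdiv.Idomain.divp G P * P.
  by rewrite eG addrC addKr.
rewrite mulrBl -scalerAl -mul_polyC -mulrA.
by apply: dvdrB; apply: dvdr_mull.
Qed.

Lemma exists_primitive_multiplier P : P != 0 -> I P ->
  exists Q, [/\ Q != 0, I Q, size Q = size P & primitive_poly Q].
Proof.
have [N] := ubnP (mu (lead_coef P)); elim: N P => // N IHN P mu_lt P0 IP.
have [P_prim|P_nprim] := classic (primitive_poly P); first by exists P.
have [p p_prime [P' eP]] : exists2 p, prime_elt p & dvdr p%:P P.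
  by apply: NNPP => no_p; apply: P_nprim => p p_prime dvd_p; apply: no_p; exists p.
have [p0 pU _] := p_prime.
have P'0 : P' != 0 by apply: contraNneq P0 => P'0; rewrite eP P'0 mulr0.
have <- : size P' = size P by rewrite eP size_Cmul.
apply: IHN => //.
  rewrite -ltnS (leq_trans _ mu_lt) // ltnS eP lead_coefM lead_coefC.
  by apply: mu_mul; rewrite ?lead_coef_eq0.
by apply: (primitive_dvdr_mulC f_prim p0); rewrite mulrA -eP.
Qed.

Lemma multiplier_ideal_principal g : g != 0 -> I g ->
  exists P, I P /\ forall G, I G -> dvdr P G.
Proof.
move=> g0 Ig; have : exists k P, [/\ P != 0, I P & size P = k] by exists (size g), g.
case/ex_min_nat => _ [[P [P0 IP <-]] P_min].
have [Q [Q0 IQ sQ Q_prim]] := exists_primitive_multiplier P0 IP.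
exists Q; split=> // G IG.
apply: (primitive_dvdr_mulC (a := lead_coef Q ^+ scalp G Q) Q_prim).
  by rewrite expf_neq0 // lead_coef_eq0.
by apply: min_size_multiplier_dvdr => // Q' Q'0 IQ'; rewrite sQ; apply: P_min; exists Q'.
Qed.

End MultiplierIdeal.

Lemma irreducible_elt_prime_poly f : irreducible_elt f -> prime_elt f.
Proof.
move=> f_irr; have [f0 fU f_fact] := f_irr.
have [sf|sf] := leqP (size f) 1.
  rewrite [f]size1_polyC // in f_irr *.
  exact/prime_elt_polyC/irreducible_elt_prime_C/irreducible_elt_polyC.
split=> // g h dvd_gh; have [->|g0] := eqVneq g 0; first by left; exact: dvdr0.
have f_prim := irreducible_primitive f_irr sf.
have [P [[t et] P_gen]] := multiplier_ideal_principal f_prim g0 dvd_gh.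
have [Q eQ] := P_gen f (dvdr_mulr _ (dvdr_refl f)).
case: (f_fact _ _ eQ) => [PU|QU].
  by right; exists (P^-1 * t); rewrite mulrCA -et mulrA mulVr // mul1r.
by left; rewrite eQ dvdr_mulr_unit //; exact: P_gen.
Qed.

End PolyPrime.

Local Notation widen := (widen_ord (leqnSn _)).

Section MuniBijective.
Variables (n : nat) (R : comNzRingType).

Definition mnmlow (m : 'X_{1..n.+1}) : 'X_{1..n} := [multinom m (widen i) | i < n].

Lemma mnmlow_widen m : mnmlow (mnmwiden m) = m.
Proof. by apply/mnmP => i; rewrite mnmE mnmwiden_widen. Qed.

Lemma muniX (m : 'X_{1..n.+1}) :
  muni 'X_[m] = ('X_[mnmlow m] : {mpoly R[n]})%:P * 'X^(m ord_max).
Proof. by rewrite muniE msuppX big_seq1 mcoeffX eqxx scale1r mul_polyC. Qed.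

Lemma muni_mwiden (c : {mpoly R[n]}) : muni (mwiden c) = c%:P.
Proof.
elim/mpolyind: c => [|c m p _ _ IHp]; first by rewrite raddf0 muni0.
rewrite raddfD /= muniD IHp mwidenZ muniZ mwidenX muniX mnmlow_widen.
by rewrite mnmwiden_ordmax expr0 mulr1 polyCD -mul_polyC -polyCM mul_mpolyC.
Qed.

Lemma muniXmax : muni ('X_ord_max : {mpoly R[n.+1]}) = 'X.
Proof.
rewrite muniX (_ : mnmlow _ = 0%MM) ?mpolyX0 ?mnm1E ?eqxx ?expr1 ?mul1r //.
by apply/mnmP => -[i lt_in]; rewrite !mnmE /= eq_sym eqE /= ltn_eqF.
Qed.

Lemma muni_surj (P : {poly {mpoly R[n]}}) : exists p, muni p = P.
Proof.
elim/poly_ind: P => [|P c [p <-]]; first by exists 0; rewrite muni0.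
by exists (p * 'X_ord_max + mwiden c); rewrite muniD muniM muniXmax muni_mwiden.
Qed.

Lemma mmultiE (P : {poly {mpoly R[n]}}) k : (size P <= k)%N ->
  mmulti P = \sum_(i < k) mwiden P`_i * 'X_ord_max ^+ i.
Proof.
move=> le_Pk.
rewrite /mmulti (big_ord_widen k (fun i => mwiden P`_i * 'X_ord_max ^+ i)) //.
rewrite big_mkcond /=; apply: eq_bigr => i _; case: ltnP => // le_Pi.
by rewrite nth_default // raddf0 mul0r.
Qed.

Lemma mmultiD (P Q : {poly {mpoly R[n]}}) : mmulti (P + Q) = mmulti P + mmulti Q.
Proof.
pose k := maxn (size P) (size Q).
rewrite !(mmultiE (k := k)) ?leq_maxl ?leq_maxr //; last first.
  by rewrite (leq_trans (size_polyD _ _)).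
by rewrite -big_split; apply: eq_bigr => i _; rewrite coefD raddfD mulrDl.
Qed.

Lemma mmultiCX (a : {mpoly R[n]}) k :
  mmulti (a%:P * 'X^k) = mwiden a * 'X_ord_max ^+ k.
Proof.
rewrite (mmultiE (k := k.+1)); last first.
  by rewrite mul_polyC (leq_trans (size_scale_leq _ _)) // size_polyXn.
rewrite big_ord_recr /= big1 ?add0r; first by rewrite coefCM coefXn eqxx mulr1.
by move=> i _; rewrite coefCM coefXn ltn_eqF // mulr0 raddf0 mul0r.
Qed.

Lemma muniK : cancel (@muni n R) (@mmulti n R).
Proof.
elim/mpolyind => [|c m p _ _ IHp].
  by rewrite muni0 /mmulti size_poly0 big_ord0.
rewrite muniD mmultiD [X in _ + X = _]IHp; congr (_ + _).
rewrite muniZ muniX scalerAl scale_polyC mul_mpolyC mmultiCX.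
rewrite mwidenZ mwidenX -scalerAl; congr (_ *: _).
rewrite mpolyXn -mpolyXD; congr 'X_[_]; apply/mnmP => i.
rewrite mnmDE mulmnE mnm1E.
case: (unliftP ord_max i) => [j ->|->].
  have -> : lift ord_max j = widen j by apply/val_inj; rewrite /= /bump leqNgt ltn_ord.
  by rewrite mnmwiden_widen mnmE eqE /= gtn_eqF // mul0n addn0.
by rewrite mnmwiden_ordmax eqxx mul1n.
Qed.

Lemma mmultiK : cancel (@mmulti n R) (@muni n R).
Proof. by move=> P; have [p <-] := muni_surj P; rewrite muniK. Qed.

Lemma muni_bij : bijective (@muni n R).
Proof. exact: Bijective muniK mmultiK. Qed.

End MuniBijective.

Section EvalMuni.
Variable R : comNzRingType.

Definition vrcons n (v : 'I_n -> R) (t : R) : 'I_n.+1 -> R :=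
  fun i => oapp v t (insub (val i)).

Lemma meval_vrcons n (p : {mpoly R[n.+1]}) v t :
  p.@[vrcons v t] = (map_poly (meval v) (muni p)).[t].
Proof.
elim/mpolyind: p => [|c m p _ _ IHp].
  by rewrite meval0 muni0 map_poly0 horner0.
rewrite mevalD muniD rmorphD hornerD IHp; congr (_ + _).
rewrite muniZ muniX mevalZ mevalX /= map_polyZ hornerZ rmorphM /=.
rewrite map_polyC map_polyXn.
rewrite hornerM hornerXn hornerC /= mevalC mevalX big_ord_recr /=.
rewrite /vrcons insubF /= ?ltnn //; congr (_ * (_ * _)).
apply: eq_bigr => i _; rewrite mnmE insubT // => lt_in.
by congr (v _ ^+ _); apply: val_inj.
Qed.

End EvalMuni.

Section MpolyFactorization.
Variable K : fieldType.

Lemma msize_mpoly0 (p : {mpoly K[0]}) : (msize p <= 1)%N.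
Proof. by rewrite msizeE; apply/bigmax_leqP_seq => m _ _; rewrite mdegE big_ord0. Qed.

Variable n : nat.
Implicit Types p q : {mpoly K[n]}.

Lemma mpoly_unitE p : (p \is a GRing.unit) = (msize p == 1%N).
Proof.
apply/idP/idP => [/andP[/eqP ep pU]|/msize_poly1P[c c0 ->]].
  have c0 : p@_0 != 0 by apply: contraTneq pU => ->; rewrite unitr0.
  by rewrite ep msizeC c0.
by apply/andP; rewrite mcoeffC eqxx mulr1 unitfE.
Qed.

Lemma msize_nonunit p : p != 0 -> p \notin GRing.unit -> (1 < msize p)%N.
Proof. by rewrite mpoly_unitE -msize_poly_eq0; case: (msize p) => [|[]]. Qed.

Lemma irreducible_msize_gt1 p : irreducible_elt p -> (1 < msize p)%N.
Proof. by case=> p0 pU _; apply: msize_nonunit. Qed.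

Lemma msize_mul_nonunit p q : p != 0 -> q != 0 -> q \notin GRing.unit ->
  (msize p < msize (q * p))%N.
Proof.
move=> p0 q0 qU; rewrite msizeM //.
case: (msize q) (msize_nonunit q0 qU) => [|[|k]] // _.
by rewrite addSn /= addSn ltnS leq_addl.
Qed.

Lemma exists_irreducible_divisor p : p != 0 -> p \notin GRing.unit ->
  exists2 e, irreducible_elt e & dvdr e p.
Proof.
have [N] := ubnP (msize p); elim: N p => // N IHN p lt_pN p0 pU.
have [p_irr|p_red] := classic (irreducible_elt p).
  by exists p; last exact: dvdr_refl.
have [x [y [exy xU yU]]] :
    exists x y, [/\ p = x * y, x \notin GRing.unit & y \notin GRing.unit].
  apply: NNPP => no_xy; apply: p_red; split=> // x y exy.
  by apply: NNPP => /not_or_and[/negP xU /negP yU]; apply: no_xy; exists x, y.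
have x0 : x != 0 by apply: contraNneq p0 => x0; rewrite exy x0 mul0r.
have y0 : y != 0 by apply: contraNneq p0 => y0; rewrite exy y0 mulr0.
have [|e e_irr dvd_ex] := IHN x _ x0 xU.
  by rewrite -ltnS (leq_trans _ lt_pN) // ltnS exy mulrC msize_mul_nonunit.
by exists e; rewrite // exy; apply: dvdr_mulr.
Qed.

End MpolyFactorization.

Lemma mpoly_irreducible_prime (K : fieldType) n (f : {mpoly K[n]}) :
  irreducible_elt f -> prime_elt f.
Proof.
elim: n f => [|n IHn] f.
  by move/irreducible_msize_gt1; rewrite ltnNge msize_mpoly0.
rewrite -(iso_prime (muni_bij n K)) => /(iso_irreducible (muni_bij n K)).
apply: (irreducible_elt_prime_poly (@msize_mul_nonunit K n)).
move=> a a0 aU; have [e e_irr dvd_ea] := exists_irreducible_divisor a0 aU.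
by exists e; first exact: IHn.
Qed.

Section ClosedField.
Variable K : closedFieldType.

Lemma poly_nonroot (P : {poly K}) : P != 0 -> exists t, P.[t] != 0.
Proof.
move=> P0; have sP : (0 < size P)%N by rewrite size_poly_gt0.
have : size (P * 'X - 1) != 1%N.
  by rewrite size_addl ?size_polyN ?size_poly1 size_mulX //; case: (size P) sP.
case/closed_rootP => t; rewrite rootE !hornerE => /eqP /subr0_eq Pt.
by exists t; apply: contra_eq_neq Pt => ->; rewrite mul0r eq_sym oner_eq0.
Qed.

Lemma poly_allroot_eq0 (P : {poly K}) : (forall t, P.[t] = 0) -> P = 0.
Proof.
by move=> P_root; apply: contraTeq isT => /poly_nonroot [t]; rewrite P_root eqxx.
Qed.

Lemma dvdp_exp_roots (E G : {poly K}) : E != 0 ->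
  (forall t, root E t -> root G t) -> E %| G ^+ (size E).-1.
Proof.
move=> E0 E_G; have [rs ers] := closed_field_poly_normal E.
have lc0 : lead_coef E != 0 by rewrite lead_coef_eq0.
have -> : (size E).-1 = size rs by rewrite {1}ers size_scale // size_prod_XsubC.
rewrite ers dvdpZl //.
have : all (root G) rs.
  by apply/allP => z zr; apply: E_G; rewrite ers rootZ // root_prod_XsubC.
elim: rs {ers} => [|z rs IHrs] /=; first by rewrite big_nil expr0 dvdpp.
case/andP => Gz Grs; rewrite big_cons exprS.
by rewrite dvdp_mul // -?root_factor_theorem ?IHrs.
Qed.

Lemma mpoly_nonvanish n (p : {mpoly K[n]}) : p != 0 -> exists v, p.@[v] != 0.
Proof.
elim: n p => [|n IHn] p p0.
  exists (fun _ => 0); rewrite [p]msize1_polyC ?msize_mpoly0 // mevalC.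
  by apply: contraNneq p0 => p_0; rewrite [p]msize1_polyC ?msize_mpoly0 // p_0.
have P0 : muni p != 0 by rewrite (raddf_eq0 _ (bij_inj (muni_bij n K))).
have [v lc_v] : exists v, (lead_coef (muni p)).@[v] != 0.
  by apply: IHn; rewrite lead_coef_eq0.
have [|t pvt] := @poly_nonroot (map_poly (meval v) (muni p)).
  by rewrite -size_poly_eq0 size_map_poly_id0 // size_poly_eq0.
by exists (vrcons v t); rewrite meval_vrcons.
Qed.

Lemma mpoly_allroot_eq0 n (p : {mpoly K[n]}) : (forall v, p.@[v] = 0) -> p = 0.
Proof.
by move=> p_root; apply: contraTeq isT => /mpoly_nonvanish [v]; rewrite p_root eqxx.
Qed.

End ClosedField.

Section Nullstellensatz.
Variable K : closedFieldType.

(* At every [v] with [(lead_coef E).@[v] != 0] the remainder of [G ^+ N] by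
   [E] specializes to a polynomial divisible by [E_v] (by dvdp_exp_roots) and
   of smaller size, hence to 0. *)
Lemma pseudo_dvdr_of_roots n (E G : {poly {mpoly K[n]}}) (N := (size E).-1) :
    E != 0 ->
    (forall v t, root (map_poly (meval v) E) t -> root (map_poly (meval v) G) t) ->
  dvdr E ((lead_coef E ^+ scalp (G ^+ N) E)%:P * G ^+ N).
Proof.
move=> E0 E_G; set c := lead_coef E; set s := scalp _ E.
pose Q := Pdiv.Idomain.divp (G ^+ N) E; pose r := Pdiv.Idomain.modp (G ^+ N) E.
have c0 : c != 0 by rewrite lead_coef_eq0.
have eG : c ^+ s *: G ^+ N = Q * E + r := Pdiv.Idomain.divp_eq (G ^+ N) E.
suff r0 : r = 0 by exists Q; rewrite mul_polyC eG r0 addr0 mulrC.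
apply/polyP => i; rewrite coef0; apply: (mulfI c0); rewrite mulr0.
apply: mpoly_allroot_eq0 => v; rewrite mevalM.
have [->|cv] := eqVneq c.@[v] 0; first by rewrite mul0r.
pose ev := map_poly (meval v).
suff rv0 : ev r = 0.
  by have := congr1 (coefp i) rv0; rewrite /= coef_map coef0 => ->; rewrite mulr0.
have sEv : size (ev E) = size E by rewrite size_map_poly_id0.
have Ev0 : ev E != 0 by rewrite -size_poly_eq0 sEv size_poly_eq0.
have Ev_rv : ev E %| ev r.
  have -> : ev r = c.@[v] ^+ s *: ev G ^+ N - ev Q * ev E.
    by rewrite -!rmorphXn -map_polyZ -!rmorphM -rmorphB eG addrC addKr.
  rewrite dvdp_sub ?dvdp_mull // dvdpZr ?expf_neq0 // /N -sEv.
  by apply: dvdp_exp_roots => // t; apply: E_G.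
apply/eqP; apply: contraT => rv0.
have := leq_trans (dvdp_leq rv0 Ev_rv) (size_poly _ _).
by rewrite sEv leqNgt Pdiv.Idomain.ltn_modp E0.
Qed.

Lemma prime_dvdr_of_roots n (E G : {poly {mpoly K[n]}}) :
    prime_elt E -> (1 < size E)%N ->
    (forall v t, root (map_poly (meval v) E) t -> root (map_poly (meval v) G) t) ->
  dvdr E G.
Proof.
move=> E_prime sE E_G; have E0 : E != 0 by case: E_prime.
have := pseudo_dvdr_of_roots E0 E_G.
case/(prime_elt_dvdM E_prime); last exact: prime_elt_dvdX.
rewrite rmorphXn => /(prime_elt_dvdX E_prime) /size_dvdr_polyC.
by rewrite lead_coef_eq0 leqNgt sE => /(_ E0).
Qed.

Lemma muni_roots n (e g : {mpoly K[n.+1]}) :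
    (forall v, e.@[v] = 0 -> g.@[v] = 0) ->
  forall (v : 'I_n -> K) (t : K),
    root (map_poly (meval v) (muni e)) t -> root (map_poly (meval v) (muni g)) t.
Proof.
move=> e_g v t; rewrite /root => /eqP Ev; apply/eqP.
transitivity g.@[vrcons v t]; first by rewrite meval_vrcons.
by apply: e_g; rewrite meval_vrcons.
Qed.

Theorem mpoly_nullstellensatz n (e g : {mpoly K[n]}) : irreducible_elt e ->
  (forall v, e.@[v] = 0 -> g.@[v] = 0) -> dvdr e g.
Proof.
elim: n e g => [|n IHn] e g e_irr e_g.
  by have := irreducible_msize_gt1 e_irr; rewrite ltnNge msize_mpoly0.
have E_prime : prime_elt (muni e).
  exact: (iso_prime (muni_bij n K) e).2 (mpoly_irreducible_prime e_irr).
have E_irr : irreducible_elt (muni e) := iso_irreducible (muni_bij n K) e_irr.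
have E_G := muni_roots e_g.
rewrite -(iso_dvdrE (muni_bij n K)) /=.
move: (muni e) (muni g) E_prime E_irr E_G => E G E_prime E_irr E_G.
have [sE|sE] := leqP (size E) 1; last exact: prime_dvdr_of_roots.
rewrite [E]size1_polyC // in E_irr E_G *; apply/dvdr_polyCP => i.
apply: IHn => [|v cv]; first exact: irreducible_elt_polyC.
have Gv0 : map_poly (meval v) G = 0.
  by apply: poly_allroot_eq0 => t; apply/eqP/E_G; rewrite map_polyC rootC /= cv.
by have := congr1 (coefp i) Gv0; rewrite /= coef_map coef0.
Qed.

End Nullstellensatz.

Theorem theorem4p4 (K : closedFieldType) (Hchar : [pchar K] =i pred0)
  (F : {mpoly K[4]}) (q : 'I_4 -> {mpoly K[3]}) (s : 3.-tuple {mpoly K[3]}) :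
  proj_surface F ->
  homog_same_deg q -> gcd_is_one q ->
  image_dense_in q (zero_set F) ->
  homog_same_deg (tnth s) -> gcd_is_one (tnth s) ->
  dominant (tnth s) ->
  (~ exists A : 'I_3 -> K, is_base_point q A) ->
  gcd_is_one (fun i : 'I_4 => q i \mPo s).
Proof.
move=> _ _ _ _ _ s_coprime _ no_base d dvd_d; apply: NNPP => d_nconst.
have d0 : d != 0 by apply/eqP => d0; apply: d_nconst; rewrite /mconst d0 msize0.
have dU : d \notin GRing.unit.
  by rewrite mpoly_unitE; apply/negP => /eqP d1; apply: d_nconst; rewrite /mconst d1.
have [e e_irr [c dE]] := exists_irreducible_divisor d0 dU.
have [j e_ndvd_sj] : exists j, ~ dvdr e (tnth s j).
  apply: NNPP => e_dvd_s; have := irreducible_msize_gt1 e_irr.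
  rewrite ltnNge s_coprime // => j; apply: NNPP => e_ndvd; apply: e_dvd_s; by exists j.
have [v [ev sjv]] : exists v, e.@[v] = 0 /\ (tnth s j).@[v] != 0.
  apply: NNPP => no_v; apply/e_ndvd_sj/mpoly_nullstellensatz => // v ev.
  by apply: NNPP => sjv; apply: no_v; exists v; split=> //; apply/eqP.
apply: no_base; exists (fun k => (tnth s k).@[v]); split; first by exists j.
move=> i; rewrite -comp_mpoly_meval; have [c' ->] := dvd_d i.
by rewrite dE !mevalM ev !mul0r.
Qed.
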